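(* For each real number $\epsilon>0$ there is a positive integer $n$ and a subset $S\subseteq\mathbb{Z}/n\mathbb{Z}$ with $|S|\ge(1-\epsilon)n$ such that the congruence $abc\equiv d^2\pmod n$ has no solution with $a,b,c,d\in S$ (not necessarily distinct). *)

From mathcomp Require Import all_boot.
From Stdlib Require Import Reals.
Set Implicit Arguments. Unset Strict Implicit. Unset Printing Implicit Defensive.

(* Z/nZ is represented by the residues 'I_n = {0,...,n-1}; congruence mod n is
   ssrnat's  x = y %[mod n]  on the representatives. *)
Definition no_abc_d2 (n : nat) (S : {set 'I_n}) : Prop :=
  forall a b c d : 'I_n, a \in S -> b \in S -> c \in S -> d \in S ->
    ~ (a * b * c = d * d %[mod n]).

(* Fix a finite set P of primes, let n = prod_(p in P) p^3, let omega x be the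
   number of p in P dividing x, and mu = sum_(p in P) 1/p its mean over Z/nZ.
   - Local obstruction: if abc = d^2 (mod p^3) and p^2 does not divide d, then
     [p | a] + [p | b] + [p | c] <= 2 [p | d]; summing over P gives
     omega a + omega b + omega c <= 2 omega d.
   - Hence good_set = {x : no p^2 divides x, |omega x - mu| < mu/8} has no
     solution, as 21 mu / 8 < 18 mu / 8 is impossible.
   - Counting: at most n sum 1/p^2 residues are divisible by some p^2, and the
     second moment sum_x (omega x - mu)^2 <= n mu (divisibility by distinct
     primes is uncorrelated) leaves at most 64 n / mu far from the mean.
   - Analytic input: sum_(p in (B, N]) 1/p is unbounded in N (via Euler's
     inequality H_N <= prod_(p <= N) (1 - 1/p)^-1 and H_(2^k) >= k/2), while
     sum_(p > B) 1/p^2 <= 1/B.  Taking P = the primes in (2K, N] for N large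
     gives density >= 1 - 1/K, and K is chosen with 1/K < eps. *)

From mathcomp Require Import all_boot all_order all_algebra.
From mathcomp Require Import ring lra.
Set Implicit Arguments. Unset Strict Implicit. Unset Printing Implicit Defensive.
Import Order.TTheory GRing.Theory Num.Theory.

Lemma congr_dvdm m k x y : k %| m -> x = y %[mod m] -> x = y %[mod k].
Proof. by move=> km e; rewrite -(modn_dvdm x km) e modn_dvdm. Qed.

Lemma congr_dvdn m x y : x = y %[mod m] -> (m %| x) = (m %| y).
Proof. by move=> e; rewrite /dvdn e. Qed.

(* Indeed
   p | d iff p | abc, and p | a, b, c would give p^3 | d^2, hence p^2 | d. *)
Lemma local_divisor_bound p a b c d : prime p ->
  a * b * c = d * d %[mod p ^ 3] -> ~~ (p ^ 2 %| d) ->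
  (p %| a) + (p %| b) + (p %| c) <= 2 * (p %| d).
Proof.
move=> pp e nd.
have e1 : a * b * c = d * d %[mod p].
  by rewrite -[p]expn1; apply: congr_dvdm e; rewrite dvdn_exp2l.
have dvd_d : (p %| d) = [|| p %| a, p %| b | p %| c].
  by rewrite orbA -!Euclid_dvdM // (congr_dvdn e1) Euclid_dvdM // orbb.
case: (boolP (p %| d)) => pd; last first.
  by move: pd; rewrite dvd_d !negb_or => /and3P[/negbTE-> /negbTE-> /negbTE->].
case: (boolP (p %| a)) => pa; case: (boolP (p %| b)) => pb;
  case: (boolP (p %| c)) => pc //=.
have p3_d2 : p ^ 3 %| d * d.
  by rewrite -(congr_dvdn e) (_ : 3 = 1 + 1 + 1) // !expnD !dvdn_mul.
case/negP: nd; case/dvdnP: pd p3_d2 => e' ->.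
rewrite mulnACA mulnn (_ : 3 = 1 + 2) // expnD dvdn_pmul2r ?expn_gt0 ?prime_gt0 //.
by rewrite expn1 Euclid_dvdX // andbT => pe; rewrite -mulnn dvdn_mul.
Qed.

Lemma count_multiples n d : d %| n -> \sum_(x < n) (d %| x) = n %/ d.
Proof.
move=> dn; rewrite divn_count_dvd -(big_mkord predT (fun x => nat_of_bool (d %| x))).
apply/eqP; rewrite -(eqn_add2r (d %| n)) -big_nat_recr //= big_ltn //= dvdn0 addnC.
by rewrite dn big_add1.
Qed.

Lemma has_le_sum (T : Type) (a : pred T) (s : seq T) :
  has a s <= \sum_(i <- s) a i.
Proof.
by elim: s => [|x s IH]; rewrite ?big_nil ?big_cons //=; case: (a x).
Qed.

Lemma prod_logn N m : m < N -> \prod_(i < N.+1) i ^ logn i m.+1 = m.+1.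
Proof.
move=> mN; rewrite -[RHS](partnT (ltn0Sn m)) /partn.
rewrite -(big_mkord predT (fun i => i ^ logn i m.+1)) (@big_cat_nat _ _ _ m.+2) //=.
rewrite [X in _ * X]big1_seq ?muln1 //.
move=> i /andP[_]; rewrite mem_index_iota => /andP[mi _].
by rewrite ltn_log0 // ltnW.
Qed.

Local Open Scope ring_scope.

Lemma near_window (R : realFieldType) (y m : R) :
  0 <= m -> (y - m) ^+ 2 < (m / 8) ^+ 2 -> 7 * m / 8 < y /\ y < 9 * m / 8.
Proof. by move=> m0 h; split; nra. Qed.

Section PrimeSet.
Variable P : seq nat.

(* For a finite set P of primes: the modulus n = prod_(p in P) p^3, the number
   omega x of primes of P dividing x, its average mu = sum 1/p over the residues
   mod n, and the density tau = sum 1/p^2 of residues divisible by some p^2. *)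
Definition cube_modulus : nat := \prod_(p <- P) p ^ 3.
Definition omega (x : nat) : nat := \sum_(p <- P) (p %| x).
Definition mean_omega : rat := \sum_(p <- P) p%:R^-1.
Definition square_density : rat := \sum_(p <- P) (p ^ 2)%:R^-1.

Local Notation n := cube_modulus.
Local Notation mu := mean_omega.

Lemma dvd_cube_modulus p k : p \in P -> (k <= 3)%N -> (p ^ k %| n)%N.
Proof.
move=> pP k3; rewrite (dvdn_trans (dvdn_exp2l p k3)) //.
by rewrite /cube_modulus (big_rem p) //= dvdn_mulr.
Qed.

Hypothesis P_prime : all prime P.

Lemma prime_gt0_in p : p \in P -> (0 < p)%N.
Proof. by move=> pP; rewrite prime_gt0 ?(allP P_prime). Qed.

Lemma cube_modulus_gt0 : (0 < n)%N.
Proof.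
rewrite /cube_modulus big_seq_cond prodn_cond_gt0 // => p /andP[pP _].
by rewrite expn_gt0 (prime_gt0_in pP).
Qed.

Lemma sum_dvd_indicator d : (d %| n)%N -> (0 < d)%N ->
  \sum_(x < n) (d %| x)%N%:R = n%:R / d%:R :> rat.
Proof.
move=> dn d0; rewrite -natr_sum count_multiples // natr_div //.
by rewrite unitfE pnatr_eq0 -lt0n.
Qed.

Definition centered (p x : nat) : rat := (p %| x)%N%:R - p%:R^-1.

Lemma centered_cross p q : p \in P -> q \in P -> p != q ->
  \sum_(x < n) centered p x * centered q x = 0.
Proof.
move=> pP qP pq; have [p0 q0] := (prime_gt0_in pP, prime_gt0_in qP).
have cop : coprime p q by rewrite prime_coprime ?dvdn_prime2 ?(allP P_prime).
have p_n : (p %| n)%N := dvd_cube_modulus (k := 1) pP isT.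
have q_n : (q %| n)%N := dvd_cube_modulus (k := 1) qP isT.
have pq_n : (p * q %| n)%N by rewrite Gauss_dvd // p_n.
under eq_bigr => x _ do rewrite /centered mulrBl !mulrBr -natrM mulnb
  -Gauss_dvd // [_^-1 * _]mulrC.
rewrite !sumrB -!mulr_suml !sum_dvd_indicator ?muln_gt0 ?p0 //.
rewrite sumr_const card_ord -mulr_natl natrM.
have [pr0 qr0] : p%:R != 0 :> rat /\ q%:R != 0 :> rat by rewrite !pnatr_eq0 -!lt0n.
by field; apply/andP.
Qed.

Lemma centered_square p : p \in P ->
  \sum_(x < n) centered p x ^+ 2 <= n%:R / p%:R.
Proof.
move=> pP; have p0 := prime_gt0_in pP.
have idem x : (p %| x)%N%:R ^+ 2 = (p %| x)%N%:R :> rat.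
  by rewrite -natrX expnSr expn1 mulnb andbb.
have -> : \sum_(x < n) centered p x ^+ 2 = n%:R / p%:R - n%:R / p%:R / p%:R.
  under eq_bigr => x _ do rewrite /centered sqrrB idem.
  have p_n : (p %| n)%N := dvd_cube_modulus (k := 1) pP isT.
  rewrite big_split sumrB /= sumrMnl -mulr_suml sum_dvd_indicator //.
  rewrite sumr_const card_ord.
  rewrite -[_ ^+ 2 *+ n]mulr_natr -[_ *+ 2]mulr_natr.
  have pr0 : p%:R != 0 :> rat by rewrite pnatr_eq0 -lt0n.
  by field.
by rewrite lerBlDr lerDl divr_ge0 ?divr_ge0 ?ler0n.
Qed.

Hypothesis P_uniq : uniq P.

(* The second moment of omega about its mean is at most n mu: expanding the
   square, only the diagonal terms p = q survive. *)
Lemma second_moment : \sum_(x < n) ((omega x)%:R - mu) ^+ 2 <= n%:R * mu.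
Proof.
have expand x : ((omega x)%:R - mu) ^+ 2 =
    \sum_(p <- P) \sum_(q <- P) centered p x * centered q x.
  rewrite /omega natr_sum /mean_omega -sumrB expr2 mulr_suml.
  by apply: eq_bigr => p _; rewrite mulr_sumr.
under eq_bigr do rewrite expand.
rewrite exchange_big /mean_omega mulr_sumr big_seq [X in _ <= X]big_seq.
apply: ler_sum => p pP; rewrite exchange_big (bigD1_seq p) //=.
rewrite [X in _ + X]big_seq_cond [X in _ + X]big1 ?addr0.
  by under eq_bigr do rewrite -expr2; apply: centered_square.
by move=> q /andP[qP qp]; apply: centered_cross; rewrite // eq_sym.
Qed.

Definition squarefree_on (x : nat) : bool := ~~ has (fun p => p ^ 2 %| x)%N P.

Lemma omega_bound a b c d : (a * b * c = d * d %[mod n])%N -> squarefree_on d ->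
  (omega a + omega b + omega c <= 2 * omega d)%N.
Proof.
move=> e sq_d; rewrite /omega -!big_split big_distrr /= big_seq [X in (_ <= X)%N]big_seq.
apply: leq_sum => p pP; apply: local_divisor_bound; first exact: (allP P_prime).
  exact: congr_dvdm (dvd_cube_modulus pP (leqnn 3)) e.
by apply: contra sq_d => p2d; apply/hasP; exists p.
Qed.

Definition near_mean (x : nat) : bool := ((omega x)%:R - mu) ^+ 2 < (mu / 8) ^+ 2.
Definition good_set : {set 'I_n} := [set x : 'I_n | squarefree_on x && near_mean x].

Lemma mean_ge0 : 0 <= mu.
Proof. by apply: sumr_ge0 => p _; rewrite invr_ge0 ler0n. Qed.

(* On good_set, omega a + omega b + omega c > 21 mu / 8 > 18 mu / 8 > 2 omega d. *)
Lemma good_set_no_solution : no_abc_d2 good_set.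
Proof.
move=> a b c d; rewrite !inE => /andP[_ ha] /andP[_ hb] /andP[_ hc] /andP[sq_d hd] e.
have := omega_bound e sq_d; rewrite -(ler_nat rat) natrM !natrD.
have [[a1 _] [b1 _]] := (near_window mean_ge0 ha, near_window mean_ge0 hb).
have [[c1 _] [_ d1]] := (near_window mean_ge0 hc, near_window mean_ge0 hd).
have := mean_ge0; lra.
Qed.

Lemma count_not_squarefree :
  \sum_(x < n) (~~ squarefree_on x)%:R <= n%:R * square_density.
Proof.
have union_bound x :
    (~~ squarefree_on x)%:R <= \sum_(p <- P) (p ^ 2 %| x)%N%:R :> rat.
  by rewrite negbK -natr_sum ler_nat has_le_sum.
apply: (@le_trans _ _ (\sum_(x < n) \sum_(p <- P) (p ^ 2 %| x)%N%:R)).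
  by apply: ler_sum => x _; apply: union_bound.
rewrite exchange_big /square_density mulr_sumr big_seq [X in _ <= X]big_seq.
apply: ler_sum => p pP.
by rewrite sum_dvd_indicator ?expn_gt0 ?prime_gt0_in ?dvd_cube_modulus.
Qed.

Lemma count_far_from_mean :
  (\sum_(x < n) (~~ near_mean x)%:R) * (mu / 8) ^+ 2 <= n%:R * mu.
Proof.
apply: le_trans second_moment; rewrite mulr_suml; apply: ler_sum => x _.
by case: (boolP (near_mean x)) => [_|]; rewrite ?mul0r ?sqr_ge0 // mul1r -leNgt.
Qed.

(* Every residue outside good_set is counted by one of the two bounds above. *)
Lemma good_set_density : 0 < mu ->
  n%:R * (1 - square_density - 64 / mu) <= #|good_set|%:R.
Proof.
move=> mu0; pose Z : rat := \sum_(x < n) (~~ near_mean x)%:R.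
have cover (x : 'I_n) :
    1 <= (x \in good_set)%:R + (~~ squarefree_on x)%:R + (~~ near_mean x)%:R :> rat.
  by rewrite inE; case: (squarefree_on x); case: (near_mean x); rewrite /= ?ler0n ?ler1n.
have total : n%:R <= #|good_set|%:R + n%:R * square_density + Z.
  rewrite -sum1_card natr_sum [X in X + _ + _]big_mkcond /=.
  apply: le_trans (lerD (lerD (lexx _) count_not_squarefree) (lexx Z)).
  rewrite -!big_split /= -[n in n%:R]card_ord -sumr_const.
  by apply: ler_sum => x _; have := cover x; case: (x \in good_set).
have far : Z <= n%:R * (64 / mu).
  rewrite -(ler_pM2r (_ : 0 < (mu / 8) ^+ 2)) ?exprn_gt0 ?divr_gt0 //.
  rewrite (_ : n%:R * (64 / mu) * (mu / 8) ^+ 2 = n%:R * mu) ?count_far_from_mean //.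
  by field; rewrite gt_eqF.
lra.
Qed.
End PrimeSet.

Lemma geometric_sum_le (R : realFieldType) (x : R) K :
  0 <= x -> x < 1 -> \sum_(k < K) x ^+ k <= (1 - x)^-1.
Proof.
move=> x0 x1; have x1' : 0 < 1 - x by rewrite subr_gt0.
have telescope : (\sum_(k < K) x ^+ k) * (1 - x) = 1 - x ^+ K.
  elim: K => [|K IH]; first by rewrite big_ord0 mul0r expr0 subrr.
  by rewrite big_ord_recr /= mulrDl IH exprS; ring.
rewrite -(ler_pM2r x1') telescope mulVf ?gt_eqF //.
by rewrite lerBlDr lerDl exprn_ge0.
Qed.

Lemma one_sub_sum_le_prod (R : realDomainType) (I : Type) (r : seq I)
    (P : pred I) (y : I -> R) : (forall i, P i -> 0 <= y i <= 1) ->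
  1 - \sum_(i <- r | P i) y i <= \prod_(i <- r | P i) (1 - y i).
Proof.
move=> y01; elim: r => [|x r IH]; first by rewrite !big_nil subr0.
rewrite !big_cons; case: ifP => // Px; have /andP[y0 y1] := y01 x Px.
set S := \sum_(i <- r | P i) y i; set Q := \prod_(i <- r | P i) (1 - y i) in IH *.
have S0 : 0 <= S by apply: sumr_ge0 => i Pi; have /andP[] := y01 i Pi.
have : (1 - y x) * (1 - S) <= (1 - y x) * Q by rewrite ler_wpM2l ?subr_ge0.
nra.
Qed.

Definition euler_factor (p : nat) : rat := (1 - p%:R^-1)^-1.

Lemma prime_inv_le_half p : prime p -> 0 <= (p%:R^-1 : rat) <= 2^-1.
Proof.
move=> pp; rewrite invr_ge0 ler0n lef_pV2 ?posrE ?ltr0n ?prime_gt0 //.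
by rewrite ler_nat prime_gt1.
Qed.

Lemma euler_factor_bounds p : prime p -> 0 <= euler_factor p <= 2.
Proof.
move=> pp; have /andP[i0 i2] := prime_inv_le_half pp.
have half : 2^-1 <= 1 - p%:R^-1 :> rat by lra.
rewrite /euler_factor invr_ge0 (le_trans _ half) ?invr_ge0 //=.
by rewrite -[X in _ <= X]invrK lef_pV2 ?posrE ?(lt_le_trans _ half).
Qed.

(* Euler's inequality H_N <= prod_(p <= N) (1 - 1/p)^-1: expanding the product of
   the truncated geometric series sum_(k <= N) p^-k yields 1/(m+1) for every
   m < N, through the exponent vector of m + 1. *)
Lemma harmonic_le_euler_product N :
  \sum_(m < N) (m.+1)%:R^-1 <= \prod_(p < N.+1 | prime p) euler_factor p.
Proof.
pose F (i k : 'I_N.+1) : rat := if prime i then i%:R^-1 ^+ k else (k == ord0)%:R.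
have F_ge0 i k : 0 <= F i k.
  by rewrite /F; case: ifP => _; rewrite ?exprn_ge0 ?invr_ge0 ?ler0n.
have factor_le i : \sum_k F i k <= if prime i then euler_factor i else 1.
  rewrite /F; case: ifP => pi.
    by have /andP[i0 i2] := prime_inv_le_half pi; apply: geometric_sum_le; lra.
  by rewrite (bigD1 ord0) //= big1 ?addr0 // => k /negbTE->.
pose expo (m : 'I_N) : {ffun 'I_N.+1 -> 'I_N.+1} :=
  [ffun i : 'I_N.+1 => inord (logn i m.+1)].
have expoE (m : 'I_N) : \prod_i F i (expo m i) = (m.+1)%:R^-1.
  rewrite -(prod_logn (ltn_ord m)) natr_prod -prodfV; apply: eq_bigr => i _.
  have logn_small : (logn i m.+1 < N.+1)%N
    by apply: (ltn_trans (ltn_logl i (ltn0Sn m))); rewrite ltnS.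
  rewrite /F ffunE inordK //; case: ifP => pi; first by rewrite natrX exprVn.
  have -> : logn i m.+1 = 0%N by rewrite lognE pi.
  by rewrite expn0 invr1 (_ : inord 0 = ord0) //; apply/val_inj; rewrite /= inordK.
have expo_inj : {in [set: 'I_N] &, injective expo}.
  move=> m1 m2 _ _ e; have := expoE m1; rewrite e expoE => /invr_inj/eqP.
  by rewrite eqr_nat eqSS => /eqP/val_inj.
apply: (@le_trans _ _ (\prod_(i : 'I_N.+1) \sum_k F i k)); last first.
  rewrite [X in _ <= X]big_mkcond /=; apply: ler_prod => i _.
  by rewrite sumr_ge0 // factor_le.
rewrite bigA_distr_bigA /= [X in _ <= X](bigID (mem (expo @: [set: 'I_N]))) /=.
rewrite big_imset //= -[X in X <= _]addr0 lerD //; last first.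
  by apply: sumr_ge0 => f _; apply: prodr_ge0.
rewrite [X in _ <= X](eq_bigl predT) => [|m]; last by rewrite in_setT.
by apply: ler_sum => m _; rewrite expoE.
Qed.

(* H_(2^k) >= k/2: each dyadic block (2^k, 2^(k+1)] contributes at least 1/2. *)
Lemma harmonic_pow2 k : k%:R / 2 <= \sum_(m < 2 ^ k) (m.+1)%:R^-1 :> rat.
Proof.
elim: k => [|k IH]; first by rewrite mul0r sumr_ge0 // => m _; rewrite invr_ge0.
have block : 2^-1 <= \sum_(2 ^ k <= i < 2 ^ k.+1) (i.+1)%:R^-1 :> rat.
  apply: (@le_trans _ _ (\sum_(2 ^ k <= i < 2 ^ k.+1) (2 ^ k.+1)%:R^-1)).
    have len : (2 ^ k.+1 - 2 ^ k)%N = (2 ^ k)%N by rewrite expnS mul2n -addnn addnK.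
    rewrite sumr_const_nat len -[_ *+ 2 ^ k]mulr_natr !natrX exprS.
    have p0 : 2 ^+ k != 0 :> rat by rewrite expf_neq0.
    by rewrite (_ : (2 * 2 ^+ k)^-1 * 2 ^+ k = 2^-1) //; field.
  apply: ler_sum_nat => i /andP[_ hi].
  by rewrite lef_pV2 ?posrE ?ltr0n ?expn_gt0 // ler_nat.
rewrite -(big_mkord predT (fun m => (m.+1)%:R^-1)).
rewrite (@big_cat_nat _ _ _ (2 ^ k)) ?leq_exp2l //= big_mkord.
by rewrite [k.+1%:R]mulrSr mulrDl; lra.
Qed.

(* If H_N >= 2^(B+3), the primes in (B, N] have reciprocal sum >= 1/2: otherwise
   the Euler product over (B, N] is at most 2, that over [0, B] is at most
   2^(B+1), and Euler's inequality would give H_N <= 2^(B+2). *)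
Lemma prime_reciprocal_block B N : (B <= N)%N ->
  (2 ^ B.+3)%:R <= \sum_(m < N) (m.+1)%:R^-1 :> rat ->
  2^-1 <= \sum_(B.+1 <= p < N.+1 | prime p) p%:R^-1 :> rat.
Proof.
move=> BN HN; rewrite leNgt; apply/negP => small.
have euler := harmonic_le_euler_product N.
rewrite -(big_mkord prime euler_factor) (@big_cat_nat _ _ _ B.+1) //= in euler.
have head : \prod_(0 <= p < B.+1 | prime p) euler_factor p <= (2 ^ B.+1)%:R.
  rewrite natrX -(subn0 B.+1) -prodr_const_nat big_mkcond /=; apply: ler_prod => i _.
  by case: ifP => pi; [exact: euler_factor_bounds | rewrite ler01 ler1n].
have tail : \prod_(B.+1 <= p < N.+1 | prime p) euler_factor p <= 2.
  have weier : 1 - \sum_(B.+1 <= p < N.+1 | prime p) p%:R^-1 <=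
      \prod_(B.+1 <= p < N.+1 | prime p) (1 - p%:R^-1 : rat).
    apply: one_sub_sum_le_prod => p pp; have /andP[p0 p2] := prime_inv_le_half pp.
    by rewrite p0 (le_trans p2) // invf_le1 ?ler1n.
  have half : 2^-1 <= \prod_(B.+1 <= p < N.+1 | prime p) (1 - p%:R^-1 : rat) by lra.
  rewrite /euler_factor prodfV -[X in _ <= X]invrK lef_pV2 ?posrE //.
  exact: lt_le_trans half.
have ge0 (a b : nat) : 0 <= \prod_(a <= p < b | prime p) euler_factor p.
  by apply: prodr_ge0 => p pp; have /andP[] := euler_factor_bounds pp.
move: HN (le_trans euler (ler_pM (ge0 _ _) (ge0 _ _) head tail)).
rewrite !natrX !exprS; have : 0 < 2 ^+ B :> rat by rewrite exprn_gt0.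
move: (2 ^+ B) (\sum_(m < N) _) => t H; clear; lra.
Qed.

(* Some range (B, N] of primes has reciprocal sum at least 1/2; N = 2^(2^(B+4))
   works, since then H_N >= 2^(B+3). *)
Lemma prime_reciprocal_block_exists B : exists N, (B <= N)%N /\
  2^-1 <= \sum_(B.+1 <= p < N.+1 | prime p) p%:R^-1 :> rat.
Proof.
have BN : (B <= 2 ^ 2 ^ B.+4)%N.
  have B_lt : (B < 2 ^ B)%N by apply: ltn_expl.
  have mono : (2 ^ B <= 2 ^ B.+4)%N by rewrite leq_exp2l // -addn4 leq_addr.
  have exp_lt : (2 ^ B.+4 < 2 ^ 2 ^ B.+4)%N by apply: ltn_expl.
  exact: leq_trans (ltnW B_lt) (ltnW (leq_ltn_trans mono exp_lt)).
have HN := harmonic_pow2 (2 ^ B.+4).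
have halve : (2 ^ B.+4)%:R / 2 = (2 ^ B.+3)%:R :> rat by rewrite expnS natrM; field.
rewrite halve in HN; move: (2 ^ 2 ^ B.+4)%N BN HN => N BN HN.
by exists N; split; last exact: prime_reciprocal_block.
Qed.

Lemma prime_reciprocal_unbounded m B : exists N, (B <= N)%N /\
  m%:R / 2 <= \sum_(B.+1 <= p < N.+1 | prime p) p%:R^-1 :> rat.
Proof.
elim: m B => [|m IH] B.
  by exists B; split => //; rewrite mul0r sumr_ge0 // => p _; rewrite invr_ge0.
have [N1 [BN1 block]] := prime_reciprocal_block_exists B.
have [N [N1N HN]] := IH N1.
exists N; split; first exact: leq_trans BN1 N1N.
rewrite (big_cat_nat _ (n := N1.+1)) ?ltnS //= [m.+1%:R]mulrSr mulrDl.
move: block HN; move: (\sum_(B.+1 <= p < N1.+1 | _) _) (\sum_(N1.+1 <= p < N.+1 | _) _).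
by move=> s1 s2; lra.
Qed.

(* Tail of sum 1/p^2: since 1/p^2 <= 1/(p-1) - 1/p, the sum over p > B telescopes
   to at most 1/B. *)
Lemma prime_square_tail B N : (0 < B)%N ->
  \sum_(B.+1 <= p < N.+1 | prime p) (p ^ 2)%:R^-1 <= B%:R^-1 :> rat.
Proof.
move=> B0; apply: (@le_trans _ _ (\sum_(B.+1 <= p < N.+1) (p ^ 2)%:R^-1)).
  rewrite [X in X <= _]big_mkcond /=; apply: ler_sum => p _.
  by case: ifP => // _; rewrite invr_ge0.
case: (leqP B N) => BN; last by rewrite big_geq ?invr_ge0 // ltnW.
apply: (@le_trans _ _ (\sum_(B <= k < N) (k%:R^-1 - (k.+1)%:R^-1))).
  rewrite big_add1 /=; apply: ler_sum_nat => k /andP[Bk _].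
  have k0 : (0 < k)%N := leq_trans B0 Bk.
  have k0r : 0 < k%:R :> rat by rewrite ltr0n.
  have -> : k%:R^-1 - (k.+1)%:R^-1 = (k%:R * (k.+1)%:R)^-1 :> rat.
    by rewrite mulrSr; field; rewrite !gt_eqF // ?ltr_wpDl ?ltW.
  rewrite natrX lef_pV2 ?posrE ?exprn_gt0 ?mulr_gt0 ?ltr0n //.
  by rewrite expr2 ler_pM2r ?ltr0n // ler_nat.
rewrite (telescope_sumr_eq (fun k => - k%:R^-1)) => [|//|k _].
  by rewrite opprK addrC lerBlDr lerDl invr_ge0.
by rewrite opprK addrC.
Qed.

Lemma density_choice (R : realFieldType) (K tau mu : R) : 0 < K ->
  tau <= (2 * K)^-1 -> 128 * K <= mu -> 1 - K^-1 <= 1 - tau - 64 / mu.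
Proof.
move=> K0 tau_small mu_large; have mu0 : 0 < mu by lra.
have : 64 / mu <= (2 * K)^-1.
  by rewrite ler_pdivrMr // mulrC ler_pdivlMr ?mulr_gt0 //; lra.
by rewrite invfM; lra.
Qed.

Lemma density_to_nat K n s : (0 < K)%N ->
  n%:R * (1 - K%:R^-1) <= s%:R :> rat -> (K.-1 * n <= K * s)%N.
Proof.
move=> K0 dens; have Kr : 0 < K%:R :> rat by rewrite ltr0n.
rewrite -(ler_nat rat) !natrM -subn1 natrB // mulrC.
have := ler_wpM2l (ltW Kr) dens.
by rewrite mulrCA mulrBr mulr1 mulfV ?gt_eqF.
Qed.

(* For every K >= 1 some Z/nZ contains a set of density >= 1 - 1/K without
   solutions: take P = the primes in (2K, N], with N so large that mu >= 128 K;
   then tau <= 1/(2K) automatically. *)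
Lemma dense_set_exists K : (0 < K)%N -> exists n, (0 < n)%N /\
  exists S : {set 'I_n}, (K.-1 * n <= K * #|S|)%N /\ no_abc_d2 S.
Proof.
move=> K0; have [N [_ sum_inv]] := prime_reciprocal_unbounded (256 * K) (2 * K).
pose P := [seq p <- index_iota (2 * K).+1 N.+1 | prime p].
have P_prime : all prime P by apply: filter_all.
have P_uniq : uniq P by rewrite filter_uniq // iota_uniq.
have Kr : 0 < K%:R :> rat by rewrite ltr0n.
have mu_large : 128 * K%:R <= mean_omega P.
  rewrite /mean_omega big_filter; move: sum_inv; rewrite natrM.
  by move: (\sum_(_ <= _ < _ | _) _) => sum_inv; lra.
have tau_small : square_density P <= (2 * K%:R)^-1.
  by rewrite /square_density big_filter -natrM prime_square_tail ?muln_gt0.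
have mu_pos : 0 < mean_omega P by lra.
exists (cube_modulus P); split; first exact: cube_modulus_gt0.
exists (good_set P); split; last exact: good_set_no_solution.
apply: (density_to_nat K0); apply: le_trans (good_set_density P_prime P_uniq mu_pos).
by apply: ler_wpM2l; [exact: ler0n | exact: density_choice].
Qed.

Local Close Scope ring_scope.
From Stdlib Require Import Reals Psatz.

Lemma real_density (eps : R) K n s : (0 < K)%N -> (/ INR K < eps)%R ->
  (K.-1 * n <= K * s)%N -> ((1 - eps) * INR n <= INR s)%R.
Proof.
move=> K0 Keps /ssrnat.leP/le_INR; rewrite !mult_INR.
have Kpos : (0 < INR K)%R by apply: lt_0_INR; apply/ssrnat.ltP.
have -> : INR K.-1 = (INR K - 1)%R by rewrite -subn1 minus_INR //; apply/ssrnat.leP.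
have epsK : (1 < eps * INR K)%R.
  rewrite -(Rinv_l (INR K)); last exact: Rgt_not_eq.
  exact: Rmult_lt_compat_r.
have n0 := pos_INR n; move=> dens.
apply: (Rmult_le_reg_l (INR K)) => //; Psatz.nra.
Qed.

Theorem corollary3p2 :
  forall eps : R, (0 < eps)%R ->
    exists n : nat, (0 < n)%N /\
      exists S : {set 'I_n},
        ((1 - eps) * INR n <= INR #|S|)%R /\ no_abc_d2 S.
Proof.
move=> eps eps0; have [K [Keps K0]] := archimed_cor1 eps eps0.
have {}K0 : (0 < K)%N by apply/ssrnat.ltP.
have [n [n0 [S [dens no_sol]]]] := dense_set_exists K0.
by exists n; split => //; exists S; split => //; exact: real_density K0 Keps dens.
Qed.
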